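(* Let $\mathbb{M}$ and $\mathbb{M}'$ be partial groups and let $F\colon\mathbb{M}\times\Delta[m]\to\mathbb{M}'$ be a simplicial map. Then $F$ is completely determined by: (i) the maps $f_i=F|_{\mathbb{M}\times\{\bullet_i\}}\colon\mathbb{M}\to\mathbb{M}'$ for $i=0,\dots,m$; and (ii) the elements $[\eta_k]=F(v_{\mathbb{M}},\iota_k)\in\mathbb{M}'_1$ for $k=1,\dots,m$.
   Context: Partial groups are regarded as simplicial sets: the $n$-simplices of $\mathbb{M}$ are the words $[x_1|\dots|x_n]$ in the domain of the partial product, with $d_0$ deleting $x_1$, $d_n$ deleting $x_n$, $d_i$ ($0<i<n$) replacing $x_i,x_{i+1}$ by $x_ix_{i+1}$, and $s_i$ inserting $1$ in position $i+1$; $v_{\mathbb{M}}$ denotes the unique vertex of $\mathbb{M}$. $\Delta[m]$ is the nerve of the poset $\bullet_0\to\bullet_1\to\dots\to\bullet_m$; $\bullet_0,\dots,\bullet_m$ are its vertices and $\iota_k\colon\bullet_{k-1}\to\bullet_k$ ($k=1,\dots,m$) its non-degenerate edges between consecutive vertices. *)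

From mathcomp Require Import all_boot.
Set Implicit Arguments. Unset Strict Implicit. Unset Printing Implicit Defensive.

(** Partial groups in the sense of Chermak.  Words are [seq T]; [pg_D] is the
    domain of the partial product [pg_prod] (a total function, meaningful on
    [pg_D] only); [pg_inv] is the inversion. *)
Record partial_group := PartialGroup {
  pg_T :> Type;
  pg_D : seq pg_T -> Prop;
  pg_prod : seq pg_T -> pg_T;
  pg_inv : pg_T -> pg_T;
  pg_single : forall x, pg_D [:: x];
  pg_sub : forall u v, pg_D (u ++ v) -> pg_D u /\ pg_D v;
  pg_prod1 : forall x, pg_prod [:: x] = x;
  pg_assoc : forall u v w, pg_D (u ++ v ++ w) ->
      pg_D (u ++ pg_prod v :: w) /\
      pg_prod (u ++ v ++ w) = pg_prod (u ++ pg_prod v :: w);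
  pg_invK : forall x, pg_inv (pg_inv x) = x;
  pg_invP : forall u, pg_D u ->
      pg_D (rev (map pg_inv u) ++ u) /\
      pg_prod (rev (map pg_inv u) ++ u) = pg_prod [::]
}.

Arguments pg_D p _ : clear implicits.
Arguments pg_prod p _ : clear implicits.
Arguments pg_inv p _ : clear implicits.

Section PartialGroupNerve.
Variable M : partial_group.

Definition pg_one : M := pg_prod M [::].

Definition pg_simplex (n : nat) (w : seq M) : Prop := pg_D M w /\ size w = n.

(** face d_i on an n-simplex [x_1|...|x_n] (0 <= i <= n, n >= 1):
    d_0 deletes x_1, d_n deletes x_n, d_i replaces x_i,x_(i+1) by x_i x_(i+1) *)
Definition pg_face (n i : nat) (w : seq M) : seq M :=
  if i == 0 then behead w
  else if i == n then take n.-1 w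
  else take i.-1 w ++ pg_prod M (take 2 (drop i.-1 w)) :: drop i.+1 w.

Definition pg_degen (i : nat) (w : seq M) : seq M :=
  take i w ++ pg_one :: drop i w.

Definition pg_vertex : seq M := [::].
End PartialGroupNerve.

Definition delta_simplex (m n : nat) (a : seq nat) : Prop :=
  size a = n.+1 /\ sorted leq a /\ all (fun k => k <= m) a.

Definition delta_face (i : nat) (a : seq nat) : seq nat := take i a ++ drop i.+1 a.
Definition delta_degen (i : nat) (a : seq nat) : seq nat := take i.+1 a ++ drop i a.

Definition delta_vertex (n k : nat) : seq nat := nseq n.+1 k.
Definition delta_iota (k : nat) : seq nat := [:: k.-1; k].

Definition prod_simplex (M : partial_group) (m n : nat) (w : seq M) (a : seq nat) :=
  pg_simplex n w /\ delta_simplex m n a.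

(** A simplicial map F : M x Delta[m] -> M', given by its components
    F n : (M x Delta[m])_n -> M'_n (only their values on genuine simplices
    matter), commuting with all faces and degeneracies. *)
Definition simplicial_map_prod (M M' : partial_group) (m : nat)
    (F : nat -> seq M -> seq nat -> seq M') : Prop :=
  [/\ (forall n w a, prod_simplex m n w a -> pg_simplex n (F n w a)),
      (forall n w a i, prod_simplex m n.+1 w a -> i <= n.+1 ->
         F n (pg_face n.+1 i w) (delta_face i a) = pg_face n.+1 i (F n.+1 w a)) &
      (forall n w a i, prod_simplex m n w a -> i <= n ->
         F n.+1 (pg_degen i w) (delta_degen i a) = pg_degen i (F n w a))].

From mathcomp Require Import all_boot zify.

(** A simplex of dimension at least two in the nerve of a partial group is
    determined by its outer faces [d_0] and [d_n], so a simplicial map out of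
    [M x Delta[m]] is determined by its values on 1-simplices.  An edge
    [([x], [a; b])] is the inner face of the 2-simplex [([x; 1], [a; a; b])],
    whose outer faces are the vertex edge [([x], [a; a])] and the unit edge
    [([1], [a; b])]; a unit edge in turn is the inner face of
    [([1; 1], [a; a+1; b])], whose outer faces are the edge [eta_(a+1)] and a
    shorter unit edge. *)

Lemma pg_unitr (M : partial_group) (x : M) :
  pg_D M [:: x; pg_one M] /\ pg_prod M [:: x; pg_one M] = x.
Proof.
have [Dx1 prod_x1] := @pg_assoc M [:: x] [::] [::] (pg_single x).
by split; rewrite // /pg_one -prod_x1 pg_prod1.
Qed.

Lemma eq_behead_take (T : Type) n (u v : seq T) :
  size u = n.+2 -> size v = n.+2 ->
  behead u = behead v -> take n.+1 u = take n.+1 v -> u = v.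
Proof. by case: u => [|x u]; case: v => [|y v] //= _ _ -> [->]. Qed.

Lemma prod_simplex_face0 (M : partial_group) m n (w : seq M) a :
  prod_simplex m n.+1 w a -> prod_simplex m n (pg_face n.+1 0 w) (delta_face 0 a).
Proof.
case: w => [|x w]; first by case=> [[_]].
case: a => [|a0 a]; first by case=> _ [].
case=> [[Dxw [size_w]]] [[size_a] [/path_sorted sorted_a /andP[_ le_a]]].
by rewrite /pg_face /delta_face /= drop0; do !split => //; case: (@pg_sub M [:: x] w Dxw).
Qed.

Lemma prod_simplex_face_last (M : partial_group) m n (w : seq M) a :
  prod_simplex m n.+1 w a ->
  prod_simplex m n (pg_face n.+1 n.+1 w) (delta_face n.+1 a).
Proof.
case=> [[Dw size_w]] [size_a [sorted_a le_a]].
rewrite /pg_face /delta_face /= eqxx drop_oversize ?size_a // cats0.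
have [Dtake _] : pg_D M (take n w) /\ pg_D M (drop n w).
  by apply: pg_sub; rewrite cat_take_drop.
do !split; rewrite ?size_take ?size_w ?size_a ?ltnSn //; first exact: take_sorted.
by move: le_a; rewrite -{1}(cat_take_drop n.+1 a) all_cat => /andP[].
Qed.

Section Rigidity.
Variables (M M' : partial_group) (m : nat) (F G : nat -> seq M -> seq nat -> seq M').
Hypotheses (sF : simplicial_map_prod m F) (sG : simplicial_map_prod m G).

Lemma eq_simplicial_face n w a i : prod_simplex m n.+1 w a -> i <= n.+1 ->
  F n.+1 w a = G n.+1 w a ->
  F n (pg_face n.+1 i w) (delta_face i a) = G n (pg_face n.+1 i w) (delta_face i a).
Proof.
case: sF => _ faceF _; case: sG => _ faceG _ wa le_i FG.
by rewrite faceF // faceG // FG.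
Qed.

Lemma eq_simplicial_outer_faces n w a : prod_simplex m n.+2 w a ->
  F n.+1 (pg_face n.+2 0 w) (delta_face 0 a) =
    G n.+1 (pg_face n.+2 0 w) (delta_face 0 a) ->
  F n.+1 (pg_face n.+2 n.+2 w) (delta_face n.+2 a) =
    G n.+1 (pg_face n.+2 n.+2 w) (delta_face n.+2 a) ->
  F n.+2 w a = G n.+2 w a.
Proof.
case: sF => simF faceF _; case: sG => simG faceG _ wa.
rewrite faceF // faceG // faceF // faceG // /pg_face /= eqxx => FG0 FGn.
apply: (@eq_behead_take _ n) => //; [exact: (simF _ _ _ wa).2 | exact: (simG _ _ _ wa).2].
Qed.

Lemma eq_simplicial_inner_edge (x y : M) a0 a1 a2 :
  pg_D M [:: x; y] -> a0 <= a1 -> a1 <= a2 -> a2 <= m ->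
  F 1 [:: y] [:: a1; a2] = G 1 [:: y] [:: a1; a2] ->
  F 1 [:: x] [:: a0; a1] = G 1 [:: x] [:: a0; a1] ->
  F 1 [:: pg_prod M [:: x; y]] [:: a0; a2] = G 1 [:: pg_prod M [:: x; y]] [:: a0; a2].
Proof.
move=> Dxy le01 le12 le2m FG12 FG01.
have xya : prod_simplex m 2 [:: x; y] [:: a0; a1; a2].
  have le1m := leq_trans le12 le2m.
  by do !split => //=; rewrite ?le01 ?le12 ?le1m ?le2m ?(leq_trans le01 le1m).
exact: (eq_simplicial_face 1 _ _ 1 xya isT (eq_simplicial_outer_faces 0 _ _ xya FG12 FG01)).
Qed.

Hypothesis eq_vertex : forall i, i <= m -> forall n w, pg_simplex n w ->
  F n w (delta_vertex n i) = G n w (delta_vertex n i).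
Hypothesis eq_iota : forall k, 1 <= k <= m ->
  F 1 (pg_degen 0 (pg_vertex M)) (delta_iota k) =
  G 1 (pg_degen 0 (pg_vertex M)) (delta_iota k).

Lemma eq_simplicial_vertex_edge (x : M) a : a <= m ->
  F 1 [:: x] [:: a; a] = G 1 [:: x] [:: a; a].
Proof. by move=> le_am; apply: (eq_vertex a le_am 1); split=> //; apply: pg_single. Qed.

Lemma eq_simplicial_unit_edge d a : a + d <= m ->
  F 1 [:: pg_one M] [:: a; a + d] = G 1 [:: pg_one M] [:: a; a + d].
Proof.
elim: d a => [|[|d] IHd] a le_m.
- by rewrite addn0 in le_m *; apply: eq_simplicial_vertex_edge.
- by rewrite addn1 in le_m *; apply: (eq_iota a.+1); rewrite le_m.
have [D11 prod_11] := pg_unitr M (pg_one M).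
rewrite -{1}prod_11 -{3}prod_11.
apply: (eq_simplicial_inner_edge _ _ a a.+1) => //; try lia.
- by rewrite -addSnnS; apply: IHd; rewrite addSnnS.
- by apply: (eq_iota a.+1) => /=; lia.
Qed.

Lemma eq_simplicial_edge (x : M) a0 a1 : a0 <= a1 -> a1 <= m ->
  F 1 [:: x] [:: a0; a1] = G 1 [:: x] [:: a0; a1].
Proof.
move=> le01 le1m; have [Dx1 prod_x1] := pg_unitr M x.
rewrite -{1}prod_x1 -{2}prod_x1.
apply: (eq_simplicial_inner_edge _ _ a0 a0) => //.
- by have := eq_simplicial_unit_edge (a1 - a0) a0; rewrite subnKC //; apply.
- exact/eq_simplicial_vertex_edge/(leq_trans le01).
Qed.

Lemma eq_simplicial_prod n w a : prod_simplex m n w a -> F n w a = G n w a.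
Proof.
elim/ltn_ind: n w a => -[|[|n]] IHn w a wa.
- case: sF sG => simF _ _ [simG _ _].
  by rewrite (size0nil (simF _ _ _ wa).2) (size0nil (simG _ _ _ wa).2).
- case: wa => [[_ size_w]] [size_a [sorted_a le_a]].
  case: w size_w => [|x [|]] // _.
  case: a size_a sorted_a le_a => [|a0 [|a1 [|]]] // _ /= /andP[le01 _] /and3P[_ le1m _].
  exact: eq_simplicial_edge.
- apply: eq_simplicial_outer_faces => //; apply: IHn => //.
  + exact: prod_simplex_face0.
  + exact: prod_simplex_face_last.
Qed.

End Rigidity.

Theorem proposition5p2 (M M' : partial_group) (m : nat)
    (F G : nat -> seq M -> seq nat -> seq M') :
  simplicial_map_prod m F -> simplicial_map_prod m G ->
  (* (i) the restrictions f_i = F|_{M x {bullet_i}} agree *)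
  (forall i, i <= m -> forall n w, pg_simplex n w ->
     F n w (delta_vertex n i) = G n w (delta_vertex n i)) ->
  (* (ii) the elements eta_k = F(v_M, iota_k) agree
     (v_M seen as the degenerate 1-simplex s_0 v_M) *)
  (forall k, 1 <= k <= m ->
     F 1 (pg_degen 0 (pg_vertex M)) (delta_iota k) =
     G 1 (pg_degen 0 (pg_vertex M)) (delta_iota k)) ->
  forall n w a, prod_simplex m n w a -> F n w a = G n w a.
Proof. exact: eq_simplicial_prod. Qed.
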